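(* Let $m_1<m_2<\dots<m_k<m_{k+1}=n$ be positive integers with $m_i\mid m_{i+1}$ for all $1\le i\le k$. Let $\alpha$ be a primitive element of $\mathbb{F}_{q^n}$, $\alpha_i=\alpha^{(q^n-1)/(q^{m_i}-1)}$ (a primitive element of $\mathbb{F}_{q^{m_i}}$) and $L_{i}=m_{i}/m_{i-1}$ for $2\le i\le k+1$. For $1\le i\le k$ let $\mathcal{F}^i$ be the flag of type $(m_i,2m_i,\dots,m_{i+1}-m_i)$ with subspaces $\mathcal{F}^i_j=\bigoplus_{t=0}^{j-1}\mathbb{F}_{q^{m_i}}\alpha_{i+1}^t$, $1\le j\le L_{i+1}-1$. Then for each $1\le i\le k$, the code $\mathrm{Orb}(\mathcal{F}^i)$ is consistent, has minimum distance $2(m_{i+1}-m_i)$, and has $\mathbb{F}_{q^{m_i}}$ as its best friend.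
   Context: $q$ prime power; subspaces are $\mathbb{F}_q$-subspaces of $\mathbb{F}_{q^n}$; a flag is a chain $\{0\}\subsetneq\mathcal{F}_1\subsetneq\cdots\subsetneq\mathcal{F}_r\subsetneq\mathbb{F}_{q^n}$. $d_S(\mathcal{U},\mathcal{V})=\dim(\mathcal{U}+\mathcal{V})-\dim(\mathcal{U}\cap\mathcal{V})$, $d_f(\mathcal{F},\mathcal{F}')=\sum_i d_S(\mathcal{F}_i,\mathcal{F}'_i)$, $\mathrm{Orb}(\mathcal{F})=\{\mathcal{F}\alpha^j:j\ge0\}$ with $\mathcal{F}\alpha^j=(\mathcal{F}_1\alpha^j,\dots)$; the minimum distance of a code is the minimum distance between distinct codewords ($0$ if there is only one). The $i$-th projected code of a flag code $\mathcal{C}$ is $\mathcal{C}_i=\{\mathcal{F}_i:\mathcal{F}\in\mathcal{C}\}$; $\mathcal{C}$ is disjoint if $|\mathcal{C}_i|=|\mathcal{C}|$ for all $i$, and consistent if it is disjoint and $d_f(\mathcal{C})=\sum_i d_S(\mathcal{C}_i)$. A subfield $\mathbb{F}_{q^m}$ is a friend of a subspace if the subspace is an $\mathbb{F}_{q^m}$-vector space; a friend of a flag is a common friend of all its subspaces; the best friend is the largest friend. *)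

(* F_q is an abstract finite field F (q = #|F|),
   F_{q^n} is a finite-dimensional extension L : fieldExtType F (n = \dim {:L}),
   F_q-subspaces of F_{q^n} are {vspace L}. *)
From HB Require Import structures.
From mathcomp Require Import all_boot all_order all_algebra all_field.
Set Implicit Arguments.
Unset Strict Implicit.
Unset Printing Implicit Defensive.
Import GRing.Theory.
Local Open Scope ring_scope.

Section FlagDefs.
Variables (F : finFieldType) (L : fieldExtType F).

Definition dS (U V : {vspace L}) : nat := (\dim (U + V) - \dim (U :&: V))%N.

Definition flag := seq {vspace L}.

Definition dflag (G H : flag) : nat :=
  (\sum_(i < size G) dS (nth 0%VS G i) (nth 0%VS H i))%N.

Definition flag_shift (a : L) (G : flag) : flag :=
  map (fun U => (U * <[a]>)%VS) G.

Definition qn : nat := (#|F| ^ \dim {:L})%N.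

(* Orb(G) = { G alpha^j : j >= 0 }; since alpha^(q^n-1) = 1 for alpha <> 0,
   j ranges over 0 <= j < q^n - 1.  Codes are duplicate-free lists. *)
Definition Orb (alpha : L) (G : flag) : seq flag :=
  undup [seq flag_shift (alpha ^+ j) G | j <- iota 0 qn.-1].

(* i-th projected code (index i is 0-based: i = 0 is the first subspace) *)
Definition proj_code (C : seq flag) (i : nat) : seq {vspace L} :=
  undup [seq nth 0%VS G i | G <- C].

Definition disjoint_code (C : seq flag) (r : nat) : Prop :=
  forall i, (i < r)%N -> size (proj_code C i) = size C.

Definition friend_sp (K U : {vspace L}) : bool := (K * U <= U)%VS.
Definition friend_flag (K : {vspace L}) (G : flag) : bool := all (friend_sp K) G.
Definition friend_code (K : {vspace L}) (C : seq flag) : bool :=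
  all (friend_flag K) C.
Definition best_friend_code (K : {vspace L}) (C : seq flag) : Prop :=
  [/\ is_aspace K, friend_code K C &
      forall E : {subfield L}, friend_code E C -> (E <= K)%VS].

(* the subfield F_{q^m} = { x | x^(q^m) = x } *)
Definition Fqm (m : nat) : {vspace L} :=
  fixedSpace (linfun (fun x : L => x ^+ (#|F| ^ m))).

(* the flag F^i of the paper built from K = F_{q^{m_i}}, a = alpha_{i+1}
   and L_{i+1} = lpar:  F^i_j = (+)_{t<j} K a^t, 1 <= j <= lpar - 1 *)
Definition flagF (K : {vspace L}) (a : L) (lpar : nat) : flag :=
  [seq (\sum_(t < j) (K * <[a ^+ t]>))%VS | j <- iota 1 lpar.-1].

End FlagDefs.

(* minimum distance of a list code w.r.t. d; 0 if fewer than two codewords *)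
Definition min_dist (T : eqType) (d : T -> T -> nat) (C : seq T) : nat :=
  match flatten [seq [seq d x y | y <- C & y != x] | x <- C] with
  | [::] => 0%N
  | x :: s => foldr minn x s
  end.

Definition consistent_code (F : finFieldType) (L : fieldExtType F)
  (C : seq (flag L)) (r : nat) : Prop :=
  disjoint_code C r /\
  min_dist (@dflag F L) C = (\sum_(i < r) min_dist (@dS F L) (proj_code C i))%N.

From HB Require Import structures.
From mathcomp Require Import all_boot all_order all_algebra all_field.
From mathcomp Require Import zify.
Set Implicit Arguments.
Unset Strict Implicit.
Unset Printing Implicit Defensive.
Import GRing.Theory.
Local Open Scope ring_scope.

(* Fix i, let K = F_(q^(m_i)), a = alpha_(i+1) and l = m_(i+1)/m_i.  The
   components of the flag are F_j = K + K a + ... + K a^(j-1), 1 <= j < l.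
   - Since a generates F_(q^(m_(i+1))), its degree over K is at least l, so the
     sums F_j are direct and dim F_j = j m_i.  From this, F_j + F_j a = F_(j+1)
     and F_(j+1) /\ F_(j+1) a = F_j a; the latter shows by induction that the
     multiplicative stabilizer of each F_j is K^*.
   - Hence two nonzero multiples of the flag agreeing in one component are
     equal (disjointness), all components are K-spaces of the same dimension,
     so distinct ones are at distance >= 2 m_i, and F, F a attain 2 m_i in
     every component: each projected code has distance 2 m_i and the code has
     distance (l - 1) 2 m_i, their sum (consistency).  F_1 = K gives the best
     friend. *)

Lemma foldr_minn_eq (v x : nat) s :
  all (leq v) (x :: s) -> v \in x :: s -> foldr minn x s = v.
Proof.
elim: s => [|y s IH] /=; first by rewrite mem_seq1 andbT => _ /eqP ->.
rewrite !inE => /and3P[hx hy hs] hv.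
have hge : (v <= foldr minn x s)%N.
  by elim: (s) hs => //= z t IHt /andP[hz ht]; rewrite leq_min hz IHt.
have [<-|hne] := eqVneq v y; first exact/minn_idPl.
rewrite IH /= ?hx ?hs //; first exact/minn_idPr.
by move: hv; rewrite !inE (negbTE hne).
Qed.

Lemma min_distE (T : eqType) (d : T -> T -> nat) (C : seq T) v :
  (forall x y, x \in C -> y \in C -> y != x -> (v <= d x y)%N) ->
  (exists x y, [/\ x \in C, y \in C, y != x & d x y = v]) -> min_dist d C = v.
Proof.
move=> hlb [x [y [hx hy hyx hv]]]; rewrite /min_dist.
set s := flatten _.
have hin : v \in s.
  apply/flattenP; exists [seq d x y0 | y0 <- C & y0 != x]; first exact: map_f.
  by rewrite -hv map_f // mem_filter hyx.
have hall : all (leq v) s.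
  apply/allP => z /flattenP[s0 /mapP[x0 hx0 ->] /mapP[y0]].
  by rewrite mem_filter => /andP[hne hy0] ->; apply: hlb.
by case: s hin hall => [//|z s] hin hall; apply: foldr_minn_eq.
Qed.

Lemma dS_refl (F : finFieldType) (L : fieldExtType F) (U : {vspace L}) :
  dS U U = 0%N.
Proof. by rewrite /dS addvv capvv subnn. Qed.

Section FriendSpaces.
Variables (F : finFieldType) (L : fieldExtType F) (K : {subfield L}).

(* The subspaces having [K] as a friend are the [K]-vector subspaces of [L];
   they are stable under intersection and under multiplication by a scalar. *)
Lemma friend_cap U V : friend_sp K U -> friend_sp K V -> friend_sp K (U :&: V).
Proof.
rewrite /friend_sp => hU hV; rewrite subv_cap.
by rewrite (subv_trans _ hU) ?(subv_trans _ hV) ?prodvSr ?capvSl ?capvSr.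
Qed.

Lemma friend_shift U c : friend_sp K U -> friend_sp K (U * <[c]>).
Proof. by rewrite /friend_sp prodvA => h; rewrite prodvSl. Qed.

Lemma friend_shift_id U x : friend_sp K U -> x \in K -> x != 0 ->
  (U * <[x]>)%VS = U.
Proof.
move=> hU hx hx0; apply/eqP; rewrite eqEdim dim_cosetv // leqnn andbT.
by rewrite (subv_trans _ hU) // prodvC prodvSl // -memvE.
Qed.

(* Two distinct [K]-spaces of the same dimension have subspace distance at
   least [2 dim K]: dimensions of [K]-spaces are multiples of [dim K]. *)
Lemma dS_friend_lb U V : friend_sp K U -> friend_sp K V ->
  \dim U = \dim V -> U != V -> (2 * \dim K <= dS U V)%N.
Proof.
move=> hU hV hd hne.
have hc : (\dim (U :&: V) < \dim U)%N.
  rewrite ltn_neqAle dimvS ?capvSl // andbT (dimv_leqif_eq (capvSl U V)).2.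
  apply: contra hne => /eqP/capv_idPl hUV.
  by rewrite eqEdim hUV hd leqnn.
move: hc (dimv_sum_cap U V); rewrite /dS -hd.
have /dvdnP[u ->] := field_module_dimS hU.
have /dvdnP[c ->] := field_module_dimS (friend_cap hU hV).
rewrite ltn_mul2r => /andP[_ hcu].
have : (c.+1 * \dim K <= u * \dim K)%N by rewrite leq_mul2r hcu orbT.
rewrite mulSn; move: (\dim (U + V)) (\dim K) (c * \dim K)%N (u * \dim K)%N.
move=> s d x y; lia.
Qed.

End FriendSpaces.

Lemma directv_sub_pred (F : fieldType) (vT : vectType F) (I : finType)
    (P Q : pred I) (U : I -> {vspace vT}) :
  directv (\sum_(i | P i) U i) -> {subset Q <= P} ->
  directv (\sum_(i | Q i) U i).
Proof.
move=> /directv_sumP hP hQP; apply/directv_sumP => i Qi.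
have hsub : (\sum_(j | Q j && (j != i)) U j <= \sum_(j | P j && (j != i)) U j)%VS.
  apply/subv_sumP => j /andP[Qj hji].
  by apply: (sumv_sup j) => //; rewrite hji andbT; apply: hQP.
apply/eqP; rewrite -subv0; apply: subv_trans (capvS (subvv _) hsub) _.
by rewrite hP //; apply: hQP.
Qed.

Lemma cosetvM (F : fieldType) (L : fieldExtType F) (U : {vspace L}) x y :
  (U * <[x]> * <[y]> = U * <[x * y]>)%VS.
Proof. by rewrite -prodvA prodv_line. Qed.

Section PowerSums.
Variables (F : finFieldType) (L : fieldExtType F) (K : {subfield L}) (a : L).
Hypothesis a_neq0 : a != 0.

(* [powsum j] = K + K a + ... + K a^(j-1): the j-th subspace F_j of the flag
   of Theorem 9 (with K = F_(q^(m_i)) and a = alpha_(i+1)). *)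
Definition powsum (j : nat) : {vspace L} := (\sum_(t < j) (K * <[a ^+ t]>))%VS.

Local Notation deg := (adjoin_degree K a).

Lemma powsum_friend j : friend_sp K (powsum j).
Proof.
rewrite /friend_sp /powsum big_distrr /=; apply/subv_sumP => t _.
by rewrite prodvA prodv_id; apply: (sumv_sup t).
Qed.

Lemma powsum1 : powsum 1 = K.
Proof. by rewrite /powsum big_ord1 expr0 prodv1. Qed.

Lemma powsum_recr j : powsum j.+1 = (powsum j + K * <[a ^+ j]>)%VS.
Proof. by rewrite /powsum big_ord_recr. Qed.

Lemma powsum_recl j : powsum j.+1 = (K + powsum j * <[a]>)%VS.
Proof.
rewrite /powsum big_ord_recl expr0 prodv1 big_distrl; congr (_ + _)%VS.
by apply: eq_bigr => t _; rewrite /= cosetvM exprSr.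
Qed.

Lemma powsum_mono i j : (i <= j)%N -> (powsum i <= powsum j)%VS.
Proof.
elim: j => [|j IH]; first by rewrite leqn0 => /eqP ->.
rewrite leq_eqVlt => /orP[/eqP -> //|]; rewrite ltnS => /IH h.
by rewrite powsum_recr (subv_trans h) ?addvSl.
Qed.

Lemma powsum_add_shift j : (1 <= j)%N ->
  (powsum j + powsum j * <[a]> = powsum j.+1)%VS.
Proof.
move=> hj; apply: subv_anti; apply/andP; split.
  by rewrite subv_add powsum_mono // powsum_recl addvSr.
rewrite powsum_recl subv_add addvSr -{1}powsum1.
by rewrite (subv_trans (powsum_mono hj)) ?addvSl.
Qed.

(* As long as j does not exceed the degree of [a] over [K], the sum defining
   F_j is direct: dim F_j = j dim K. *)
Lemma dim_powsum j : (j <= deg)%N -> \dim (powsum j) = (j * \dim K)%N.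
Proof.
move=> hj; rewrite /powsum (big_ord_widen _ (fun t => K * <[a ^+ t]>)%VS hj).
have hdir : directv (\sum_(t < deg | (t < j)%N) (K * <[a ^+ t]>)).
  exact: directv_sub_pred (Fadjoin_sum_direct K a) _.
move: hdir; rewrite directvE /= => /eqP ->.
rewrite (eq_bigr (fun _ => \dim K)) => [|t _]; last by rewrite dim_cosetv ?expf_neq0.
by rewrite -(big_ord_widen _ (fun _ => \dim K) hj) sum_nat_const card_ord.
Qed.

(* By F_j + F_j a = F_(j+1) and the dimension formula,
   dim (F_j /\ F_j a) = (j - 1) dim K. *)
Lemma dim_powsum_cap j : (1 <= j)%N -> (j < deg)%N ->
  \dim (powsum j :&: powsum j * <[a]>) = (j.-1 * \dim K)%N.
Proof.
move=> h1 h2; have := dimv_sum_cap (powsum j) (powsum j * <[a]>).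
rewrite powsum_add_shift // dim_cosetv // !dim_powsum // ?(ltnW h2) //.
by case: j h1 h2 => // j _ _ /=; rewrite !mulSn; lia.
Qed.

Lemma dS_powsum_shift j : (1 <= j)%N -> (j < deg)%N ->
  dS (powsum j) (powsum j * <[a]>) = (2 * \dim K)%N.
Proof.
move=> h1 h2; rewrite /dS powsum_add_shift // dim_powsum_cap // dim_powsum //.
by case: j h1 h2 => // j _ _ /=; rewrite !mulSn; lia.
Qed.

Lemma powsum_cap_shift j : (1 <= j)%N -> (j.+2 <= deg)%N ->
  (powsum j.+1 :&: powsum j.+1 * <[a]> = powsum j * <[a]>)%VS.
Proof.
move=> h1 h2; apply/eqP; rewrite eq_sym eqEdim subv_cap.
rewrite {1}powsum_recl addvSr prodvSl ?powsum_mono //=.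
by rewrite dim_powsum_cap // dim_cosetv // dim_powsum // ltnW // ltnW.
Qed.

(* The multiplicative stabilizer of F_j (1 <= j < deg) is K^*: if F_j c is
   contained in F_j then c lies in K.  By induction, using the previous
   lemma to pass from F_(j+1) to F_j. *)
Lemma powsum_stabilizer j c : (1 <= j)%N -> (j < deg)%N ->
  (powsum j * <[c]> <= powsum j)%VS -> c \in K.
Proof.
elim: j => [//|[|j] IH] _ hjd hsub.
  move: hsub; rewrite powsum1 => /subvP; apply.
  by have := memv_mul (mem1v K) (memv_line c); rewrite mul1r.
apply: IH => //; first exact: ltnW.
have h : (powsum j.+1 * <[a]> * <[c]> <= powsum j.+1 * <[a]>)%VS.
  rewrite -powsum_cap_shift //.
  apply: subv_trans (_ : _ <= powsum j.+2 * <[c]> :&: powsum j.+2 * <[a]> * <[c]>)%VS _.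
    by rewrite subv_cap !prodvSl ?capvSl ?capvSr.
  by apply: capvS => //; rewrite !cosetvM mulrC -cosetvM prodvSl.
by have := prodvSl <[a^-1]> h; rewrite !cosetvM mulrCA divff // mulr1 prodv1.
Qed.

End PowerSums.

Section ShiftCodes.
Variables (F : finFieldType) (L : fieldExtType F) (K : {subfield L}) (a : L).
Variable l : nat.
Hypotheses (a_neq0 : a != 0) (l_ge2 : (2 <= l)%N) (l_le_deg : (l <= adjoin_degree K a)%N).

Local Notation Fl := (flagF K a l).

(* [C] is any code made of nonzero multiples of the flag Fl, containing Fl
   and Fl a; the orbit code of Theorem 9 is of this kind. *)
Variable C : seq (flag L).
Hypotheses (C_uniq : uniq C) (Fl_in_C : Fl \in C) (Fla_in_C : flag_shift a Fl \in C).
Hypothesis C_shifts : forall G, G \in C -> exists2 c, c != 0 & G = flag_shift c Fl.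

Lemma shift_flagE c : flag_shift c Fl = [seq (powsum K a j * <[c]>)%VS | j <- iota 1 l.-1].
Proof. by rewrite /flag_shift /flagF -map_comp. Qed.

Lemma size_shift_flag c : size (flag_shift c Fl) = l.-1.
Proof. by rewrite shift_flagE size_map size_iota. Qed.

Lemma size_flag : size Fl = l.-1.
Proof. by rewrite size_map size_iota. Qed.

Lemma nth_shift_flag c t : (t < l.-1)%N ->
  nth 0%VS (flag_shift c Fl) t = (powsum K a t.+1 * <[c]>)%VS.
Proof. by move=> ht; rewrite shift_flagE (nth_map 0%N) ?size_iota // nth_iota. Qed.

Lemma nth_flag t : (t < l.-1)%N -> nth 0%VS Fl t = powsum K a t.+1.
Proof. by move=> ht; rewrite (nth_map 0%N) ?size_iota // nth_iota. Qed.

Lemma index_lt_deg t : (t < l.-1)%N -> (t.+1 < adjoin_degree K a)%N.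
Proof. by move=> ht; apply: leq_trans l_le_deg; case: (l) ht. Qed.

(* Two nonzero multiples of Fl agreeing in one component are equal: the
   ratio of the multipliers stabilizes that component, hence lies in K, and
   every component of Fl is a K-space. *)
Lemma shift_flag_eq c1 c2 t : c1 != 0 -> c2 != 0 -> (t < l.-1)%N ->
  (powsum K a t.+1 * <[c1]> = powsum K a t.+1 * <[c2]>)%VS ->
  flag_shift c1 Fl = flag_shift c2 Fl.
Proof.
move=> h1 h2 ht heq.
have hc : c1 / c2 \in K.
  apply: (@powsum_stabilizer _ _ _ _ a_neq0 t.+1) => //; first exact: index_lt_deg.
  by rewrite -cosetvM heq cosetvM divff // prodv1.
have hc0 : c1 / c2 != 0 by rewrite mulf_neq0 ?invr_neq0.
rewrite !shift_flagE; apply: eq_map => j.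
by rewrite -{1}(divfK h2 c1) -cosetvM (friend_shift_id (powsum_friend K a j) hc hc0).
Qed.

Lemma component_inj G H t : G \in C -> H \in C -> (t < l.-1)%N ->
  nth 0%VS G t = nth 0%VS H t -> G = H.
Proof.
move=> /C_shifts[c1 h1 ->] /C_shifts[c2 h2 ->] ht; rewrite !nth_shift_flag //.
exact: shift_flag_eq.
Qed.

Lemma component_friend G t : G \in C -> (t < l.-1)%N ->
  friend_sp K (nth 0%VS G t) /\ \dim (nth 0%VS G t) = (t.+1 * \dim K)%N.
Proof.
move=> /C_shifts[c hc ->] ht; rewrite nth_shift_flag //; split.
  exact/friend_shift/powsum_friend.
by rewrite dim_cosetv // dim_powsum // ltnW // index_lt_deg.
Qed.

Lemma dS_flag_shift t : (t < l.-1)%N ->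
  dS (nth 0%VS Fl t) (nth 0%VS (flag_shift a Fl) t) = (2 * \dim K)%N.
Proof.
by move=> ht; rewrite nth_flag // nth_shift_flag // dS_powsum_shift // index_lt_deg.
Qed.

Lemma flag_shift_neq : flag_shift a Fl != Fl.
Proof.
have h0 : (0 < l.-1)%N by case: (l) l_ge2 => [//|[]].
apply/eqP => heq; have := dS_flag_shift h0; rewrite heq dS_refl => /esym/eqP.
by rewrite muln_eq0 /= => /eqP hK; have := adim_gt0 K; rewrite hK.
Qed.

Lemma shift_code_disjoint : disjoint_code C (size Fl).
Proof.
move=> t; rewrite size_flag => ht; rewrite /proj_code undup_id ?size_map //.
by rewrite map_inj_in_uniq // => G H hG hH; apply: component_inj.
Qed.

Lemma proj_codeP U t :
  U \in proj_code C t -> exists2 G, G \in C & U = nth 0%VS G t.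
Proof. by rewrite mem_undup => /mapP[G hG ->]; exists G. Qed.

Lemma proj_code_min_dist t : (t < l.-1)%N ->
  min_dist (@dS F L) (proj_code C t) = (2 * \dim K)%N.
Proof.
move=> ht; apply: min_distE.
  move=> U V /proj_codeP[G hG ->] /proj_codeP[H hH ->] hne.
  have [hG1 hG2] := component_friend hG ht; have [hH1 hH2] := component_friend hH ht.
  by apply: dS_friend_lb => //; [rewrite hG2 hH2 | rewrite eq_sym].
have hproj G : G \in C -> nth 0%VS G t \in proj_code C t.
  by move=> hG; rewrite mem_undup (map_f (fun G : flag L => nth 0%VS G t)).
exists (nth 0%VS Fl t), (nth 0%VS (flag_shift a Fl) t); split; rewrite ?hproj //.
  apply: contra flag_shift_neq => /eqP heq; apply/eqP.
  exact: component_inj heq.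
exact: dS_flag_shift.
Qed.

(* The code itself has minimum distance (l - 1) 2 dim K: each component
   contributes at least 2 dim K, and Fl, Fl a attain it. *)
Lemma shift_code_min_dist : min_dist (@dflag F L) C = (l.-1 * (2 * \dim K))%N.
Proof.
apply: min_distE.
  move=> G H hG hH hne; have [c _ hGc] := C_shifts hG.
  rewrite /dflag hGc size_shift_flag -hGc.
  rewrite -[in leqLHS](card_ord l.-1) -sum_nat_const; apply: leq_sum => t _.
  have [hG1 hG2] := component_friend hG (ltn_ord t).
  have [hH1 hH2] := component_friend hH (ltn_ord t).
  rewrite dS_friend_lb ?hG2 ?hH2 //; apply: contra hne => /eqP heq.
  by rewrite (component_inj hG hH (ltn_ord t) heq).
exists Fl, (flag_shift a Fl); split; rewrite ?flag_shift_neq //.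
rewrite /dflag size_flag -[in RHS](card_ord l.-1) -sum_nat_const.
by apply: eq_bigr => t _; rewrite dS_flag_shift.
Qed.

Lemma shift_code_consistent : consistent_code C (size Fl).
Proof.
split; first exact: shift_code_disjoint.
rewrite shift_code_min_dist size_flag -[in LHS](card_ord l.-1) -sum_nat_const.
by apply: eq_bigr => t _; rewrite proj_code_min_dist.
Qed.

(* K is the best friend: all components are K-spaces, and a friend of the
   first component F_1 = K is contained in K. *)
Lemma shift_code_best_friend : best_friend_code K C.
Proof.
split; first exact: (valP K).
  apply/allP => G /C_shifts[c _ ->]; apply/allP => U.
  by rewrite shift_flagE => /mapP[j _ ->]; apply/friend_shift/powsum_friend.
move=> E /allP /(_ _ Fl_in_C) /allP hE.
have h0 : (0 < l.-1)%N by case: (l) l_ge2 => [//|[]].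
have := hE _ (mem_nth 0%VS (_ : 0 < size Fl)%N); rewrite size_flag => /(_ h0).
rewrite nth_flag // powsum1 /friend_sp => h.
by apply: subv_trans h; rewrite -{1}(prodv1 E) prodvSr ?sub1v.
Qed.

End ShiftCodes.

Lemma prim_root_exp_div (R : nzRingType) (z : R) N D :
  N.-primitive_root z -> (0 < N)%N -> (D %| N)%N -> D.-primitive_root (z ^+ (N %/ D)).
Proof.
move=> hz hN hD; have hD0 : (0 < D)%N := dvdn_gt0 hN hD.
have hND : (0 < N %/ D)%N by rewrite divn_gt0 // dvdn_leq.
have := exp_prim_root hz (N %/ D).
have -> : gcdn (N %/ D) N = (N %/ D)%N.
  by apply/gcdn_idPl; rewrite -{2}(divnK hD) dvdn_mulr.
by rewrite -{1}(divnK hD) mulKn.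
Qed.

Section FiniteFields.
Variables (F : finFieldType) (L : fieldExtType F).
Local Notation q := #|F|.
Local Notation n := (\dim {:L}).

Lemma pred_qpow_gt0 d : (0 < d)%N -> (0 < (q ^ d).-1)%N.
Proof.
move=> hd; have hq := finNzRing_gt1 F.
have : (q ^ 1 <= q ^ d)%N by rewrite leq_exp2l.
by rewrite expn1 -subn1; move: (q ^ d)%N hq => x; move: q => Q; lia.
Qed.

Lemma expf_card_pow (c : F) d : c ^+ (q ^ d) = c.
Proof.
elim: d => [|d IH]; first by rewrite expr1.
by rewrite expnSr exprM IH expf_card.
Qed.

(* Fqm d is the set of roots of X^(q^d) - X, x |-> x^(q^d) being F-linear. *)
Lemma memFqm d (x : L) : (x \in Fqm L d) = (x ^+ (q ^ d) == x).
Proof.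
pose f (y : L) := y ^+ (q ^ d).
have fA : zmod_morphism f.
  rewrite /f => y z.
  have [p _ pcharFp] := finPcharP F; rewrite (card_pprimeChar pcharFp) -expnM.
  elim: (_ * d)%N => // e IHe; rewrite expnSr !exprM {}IHe.
  by rewrite -(pchar_lalg L) in pcharFp; rewrite -pFrobenius_autE rmorphB.
have fZ : scalable f.
  move=> c y; rewrite /f -[in LHS]mulr_algl exprMn -in_algE -rmorphXn /=.
  by rewrite expf_card_pow mulr_algl.
pose fL : {linear L -> L} :=
  HB.pack f (GRing.isZmodMorphism.Build _ _ f fA) (GRing.isScalable.Build _ _ _ _ f fZ).
by rewrite /Fqm; apply/fixedSpaceP/eqP; rewrite (lfunE fL).
Qed.

Lemma Fqm_aspace d : is_aspace (Fqm L d).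
Proof.
apply/andP; split; first by apply: has_algid1; rewrite memFqm expr1n.
by apply/prodvP => x y; rewrite !memFqm exprMn => /eqP -> /eqP ->.
Qed.

Definition Fqm_field d : {subfield L} := ASpace (Fqm_aspace d).

(* A primitive (q^d1 - 1)-th root of unity fixed by x |-> x^(q^d2) forces
   d1 <= d2, since then q^d1 - 1 divides q^d2 - 1. *)
Lemma prim_root_fixed_le (z : L) d1 d2 : (0 < d2)%N ->
  (q ^ d1).-1.-primitive_root z -> z ^+ (q ^ d2) = z -> (d1 <= d2)%N.
Proof.
case: d1 => // d1 h2 hz hz2; have hq := finNzRing_gt1 F.
have z0 : z != 0.
  apply/eqP => z0; have := prim_expr_order hz.
  by rewrite z0 expr0n eqn0Ngt pred_qpow_gt0 //= => /eqP; rewrite eq_sym oner_eq0.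
have : z ^+ (q ^ d2).-1 = 1.
  by apply: (mulIf z0); rewrite mul1r -exprSr prednK ?expn_gt0 ?(ltnW hq).
move/eqP; rewrite -(prim_order_dvd hz) => /(dvdn_leq (pred_qpow_gt0 h2)) hle.
rewrite -(leq_exp2l _ _ hq); move: hle (expn_gt0 q d1.+1) (expn_gt0 q d2).
by rewrite (ltnW hq) /=; move: (q ^ d1.+1)%N (q ^ d2)%N => x y; lia.
Qed.

Variable alpha : L.
Hypothesis alpha_prim : (qn L).-1.-primitive_root alpha.

Local Notation alpha_ d := (alpha ^+ ((qn L).-1 %/ (q ^ d).-1)).

Lemma alpha_neq0 : alpha != 0.
Proof.
apply/eqP => a0; have := prim_expr_order alpha_prim.
by rewrite a0 expr0n eqn0Ngt pred_qpow_gt0 ?adim_gt0 //= => /eqP; rewrite eq_sym oner_eq0.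
Qed.

Lemma alpha_prim_d d : (d %| n)%N -> (q ^ d).-1.-primitive_root (alpha_ d).
Proof.
move=> /dvdnP[e hd]; apply: prim_root_exp_div alpha_prim _ _.
  exact/pred_qpow_gt0/adim_gt0.
by rewrite /qn hd mulnC expnM dvdn_pred_predX.
Qed.

Lemma alpha_d_fixed d : (d %| n)%N -> (alpha_ d) ^+ (q ^ d) = alpha_ d.
Proof.
move=> hdn; have hz := alpha_prim_d hdn; set z := alpha_ d in hz *.
have hq0 : (0 < q ^ d)%N by rewrite expn_gt0 (ltnW (finNzRing_gt1 F)).
by rewrite -(prednK hq0) exprS prim_expr_order // mulr1.
Qed.

Lemma dim_Fqm d : (0 < d)%N -> (d %| n)%N -> \dim (Fqm L d) = d.
Proof.
move=> hd hdn; set K := Fqm_field d.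
have hK0 : (0 < \dim K)%N := adim_gt0 K.
have hKn : (\dim K %| n)%N by apply/field_dimS/subvf.
apply/eqP; rewrite eqn_leq; apply/andP; split.
  apply: (prim_root_fixed_le hd (alpha_prim_d hKn)); apply/eqP.
  by rewrite -memFqm -[Fqm L d]/(K : {vspace L}) Fermat's_little_theorem alpha_d_fixed.
apply: (prim_root_fixed_le hK0 (alpha_prim_d hdn)); apply/eqP.
by rewrite -Fermat's_little_theorem /= memFqm alpha_d_fixed.
Qed.

(* alpha_d generates F_(q^d), so every field containing it has dimension >= d. *)
Lemma dim_adjoin_alpha_d (K : {subfield L}) d : (d %| n)%N ->
  (d <= \dim <<K; alpha_ d>>%AS)%N.
Proof.
move=> hdn; apply: (prim_root_fixed_le (adim_gt0 _) (alpha_prim_d hdn)).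
by apply/eqP; rewrite -Fermat's_little_theorem memv_adjoin.
Qed.

End FiniteFields.

Section Orbits.
Variables (F : finFieldType) (L : fieldExtType F).

Lemma flag_shift1 (G : flag L) : flag_shift 1 G = G.
Proof. by rewrite /flag_shift (eq_map (@prodv1 _ _)) map_id. Qed.

Lemma shift_in_Orb (alpha : L) G j : (j < (qn L).-1)%N ->
  flag_shift (alpha ^+ j) G \in Orb alpha G.
Proof.
by move=> hj; rewrite mem_undup (map_f (fun j => flag_shift (alpha ^+ j) G)) ?mem_iota.
Qed.

Lemma Orb_shifts (alpha : L) G H : alpha != 0 -> H \in Orb alpha G ->
  exists2 c, c != 0 & H = flag_shift c G.
Proof.
move=> ha; rewrite mem_undup => /mapP[j _ ->].
by exists (alpha ^+ j); rewrite ?expf_neq0.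
Qed.

(* For d > 1, alpha_d = alpha^((q^n - 1)/(q^d - 1)) is a shift occurring in
   the orbit: its exponent is below q^n - 1. *)
Lemma alpha_d_exponent_lt d : (1 < d)%N ->
  ((qn L).-1 %/ (#|F| ^ d).-1 < (qn L).-1)%N.
Proof.
move=> hd; apply: ltn_Pdiv; last exact/pred_qpow_gt0/adim_gt0.
have hq := finNzRing_gt1 F.
have : (#|F| ^ 2 <= #|F| ^ d)%N by rewrite leq_exp2l.
have : (2 * 2 <= #|F| ^ 2)%N by rewrite -mulnn leq_mul.
by move: (#|F| ^ 2)%N (#|F| ^ d)%N => x y; lia.
Qed.

End Orbits.

Lemma chain_dvdn (m : nat -> nat) k j :
  (forall i, (1 <= i <= k)%N -> (m i %| m i.+1)%N) ->
  (1 <= j <= k.+1)%N -> (m j %| m k.+1)%N.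
Proof.
move=> hdvd /andP[hj1 hjk].
suff h d : (j + d <= k.+1)%N -> (m j %| m (j + d))%N by rewrite -(subnKC hjk) h ?subnKC.
elim: d => [|d IH] hd; first by rewrite addn0.
rewrite addnS in hd *; apply: dvdn_trans (IH (ltnW hd)) (hdvd _ _).
by apply/andP; split; lia.
Qed.

Lemma chain_term (m : nat -> nat) k n j : (0 < m 1)%N ->
  (forall i, (1 <= i <= k)%N -> (m i < m i.+1)%N /\ (m i %| m i.+1)%N) ->
  m k.+1 = n -> (1 <= j <= k.+1)%N -> (0 < m j)%N /\ (m j %| n)%N.
Proof.
move=> m1_gt0 hm <- hj; split; last by apply: chain_dvdn hj => i /hm[].
case: j hj => [|[|j]] // /andP[_ hj].
have hj' : (1 <= j.+1 <= k)%N by lia.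
by have [hlt _] := hm _ hj'; lia.
Qed.

Unset Implicit Arguments.
Set Strict Implicit.
Theorem mainTheorem9 (F : finFieldType) (L : fieldExtType F)
  (k : nat) (m : nat -> nat) (alpha : L) :
  (0 < m 1)%N ->
  (forall i, (1 <= i <= k)%N -> (m i < m i.+1)%N /\ (m i %| m i.+1)%N) ->
  m k.+1 = \dim {:L} ->
  (qn L).-1.-primitive_root alpha ->
  forall i, (1 <= i <= k)%N ->
    let alpha_i1 := alpha ^+ ((qn L).-1 %/ (#|F| ^ m i.+1).-1) in
    let Fi := flagF (Fqm L (m i)) alpha_i1 (m i.+1 %/ m i) in
    let C := Orb alpha Fi in
    [/\ consistent_code C (size Fi),
        min_dist (@dflag F L) C = (2 * (m i.+1 - m i))%N
      & best_friend_code (Fqm L (m i)) C].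
Proof.
move=> m1_gt0 hm hmn alpha_prim i hi a Fl C.
have [mi_lt mi_dvd] := hm i hi.
have [mi_gt0 mi_dvd_n] : (0 < m i)%N /\ (m i %| \dim {:L})%N.
  by apply: (chain_term m1_gt0 hm hmn); lia.
have [_ mi1_dvd_n] : (0 < m i.+1)%N /\ (m i.+1 %| \dim {:L})%N.
  by apply: (chain_term m1_gt0 hm hmn); lia.
pose K := Fqm_field L (m i).
have dimK : \dim K = m i by apply: (dim_Fqm alpha_prim).
set l := (m i.+1 %/ m i)%N in Fl C *.
have hml : m i.+1 = (l * m i)%N by rewrite divnK.
have l_ge2 : (2 <= l)%N by rewrite -(ltn_pmul2r mi_gt0) -hml mul1n.
have l_le_deg : (l <= adjoin_degree K a)%N.
  rewrite -(leq_pmul2r mi_gt0) -hml -dimK -dim_Fadjoin.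
  exact: (dim_adjoin_alpha_d alpha_prim).
have a_neq0 : a != 0 by rewrite expf_neq0 ?(alpha_neq0 alpha_prim).
have Fl_in_C : Fl \in C.
  by rewrite -[Fl]flag_shift1 -(expr0 alpha) shift_in_Orb ?pred_qpow_gt0 ?adim_gt0.
have Fla_in_C : flag_shift a Fl \in C by rewrite shift_in_Orb ?alpha_d_exponent_lt; lia.
have C_shifts G : G \in C -> exists2 c : L, c != 0 & G = flag_shift c Fl.
  exact: Orb_shifts (alpha_neq0 alpha_prim).
have C_uniq : uniq C := undup_uniq _.
split.
- exact: (shift_code_consistent (K := K) a_neq0 l_ge2 l_le_deg C_uniq Fl_in_C Fla_in_C C_shifts).
- rewrite (shift_code_min_dist a_neq0 l_ge2 l_le_deg Fl_in_C Fla_in_C C_shifts).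
  by rewrite dimK mulnCA -subn1 mulnBl mul1n -hml.
- exact: (shift_code_best_friend (K := K) l_ge2 Fl_in_C C_shifts).
Qed.
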